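(* If $\Gamma\vdash t:A$ is derivable in the simply typed distributive $\lambda$-calculus and $\theta$ is a substitution valid with respect to $\Gamma$, then $\theta t\in[\![A]\!]$.
   Context: Terms: $t,s,u ::= x \mid \lambda x.t \mid ts \mid \langle t,s\rangle \mid \pi_1 t \mid \pi_2 t$ (up to $\alpha$-renaming); $t\{x:=s\}$ is capture-avoiding substitution, and for a substitution $\theta$ (a map from variables to terms), $\theta t$ is the simultaneous capture-avoiding substitution. Top-level rules: $(\lambda x.t)s \mapsto t\{x:=s\}$; $\pi_i\langle t_1,t_2\rangle \mapsto t_i$ ($i=1,2$); $\langle t,s\rangle u \mapsto \langle tu, su\rangle$; $\pi_i(\lambda x.t)\mapsto \lambda x.\pi_i t$ ($i=1,2$); $\to_{\mathsf{dist}}$ is the closure of these rules under all term constructors; $\mathrm{SN}$ is the set of strongly normalizing terms. Types: $A ::= \tau \mid A\Rightarrow A \mid A\wedge A$ with $\tau$ a single atomic type. The relation $\equiv$ on types is the smallest equivalence relation containing $A\Rightarrow (B\wedge C)\equiv (A\Rightarrow B)\wedge(A\Rightarrow C)$ and closed under congruence for $\Rightarrow$ and $\wedge$. Typing rules: $\Gamma,x:A\vdash x:A$; if $\Gamma\vdash t:A$ and $A\equiv B$ then $\Gamma\vdash t:B$; if $\Gamma,x:A\vdash t:B$ then $\Gamma\vdash \lambda x.t:A\Rightarrow B$; if $\Gamma\vdash t:A\Rightarrow B$ and $\Gamma\vdash s:A$ then $\Gamma\vdash ts:B$; if $\Gamma\vdash t:A$ and $\Gamma\vdash s:B$ then $\Gamma\vdash\langle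 t,s\rangle:A\wedge B$; if $\Gamma\vdash t:A\wedge B$ then $\Gamma\vdash\pi_1 t:A$ and $\Gamma\vdash \pi_2 t:B$. Interpretation: $[\![\tau]\!]=\mathrm{SN}$; $[\![A\Rightarrow B]\!]=\{t\mid \forall s\in[\![A]\!],\ ts\in[\![B]\!]\}$; $[\![A\wedge B]\!]=\{t\mid \pi_1t\in[\![A]\!]\text{ and }\pi_2 t\in[\![B]\!]\}$. A substitution $\theta$ is valid with respect to $\Gamma$ if $\theta x\in[\![A]\!]$ for every $x:A\in\Gamma$. *)

From Stdlib Require Import List.
Import ListNotations.

Inductive term : Type :=
| Var (n : nat)
| Lam (t : term)
| App (t s : term)
| Pair (t s : term)
| Pi1 (t : term)
| Pi2 (t : term).

Definition up_ren (xi : nat -> nat) (n : nat) : nat :=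
  match n with 0 => 0 | S m => S (xi m) end.

Fixpoint ren (xi : nat -> nat) (t : term) : term :=
  match t with
  | Var n => Var (xi n)
  | Lam t => Lam (ren (up_ren xi) t)
  | App t s => App (ren xi t) (ren xi s)
  | Pair t s => Pair (ren xi t) (ren xi s)
  | Pi1 t => Pi1 (ren xi t)
  | Pi2 t => Pi2 (ren xi t)
  end.

Definition up (sigma : nat -> term) (n : nat) : term :=
  match n with 0 => Var 0 | S m => ren S (sigma m) end.

Fixpoint subst (sigma : nat -> term) (t : term) : term :=
  match t with
  | Var n => sigma n
  | Lam t => Lam (subst (up sigma) t)
  | App t s => App (subst sigma t) (subst sigma s)
  | Pair t s => Pair (subst sigma t) (subst sigma s)
  | Pi1 t => Pi1 (subst sigma t)
  | Pi2 t => Pi2 (subst sigma t)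
  end.

Definition scons (s : term) (sigma : nat -> term) (n : nat) : term :=
  match n with 0 => s | S m => sigma m end.

(* t{x:=s} where x is the bound variable 0 *)
Definition subst1 (t s : term) : term := subst (scons s Var) t.

Inductive step : term -> term -> Prop :=
| st_beta t s : step (App (Lam t) s) (subst1 t s)
| st_proj1 t s : step (Pi1 (Pair t s)) t
| st_proj2 t s : step (Pi2 (Pair t s)) s
| st_app_pair t s u : step (App (Pair t s) u) (Pair (App t u) (App s u))
| st_pi1_lam t : step (Pi1 (Lam t)) (Lam (Pi1 t))
| st_pi2_lam t : step (Pi2 (Lam t)) (Lam (Pi2 t))
| st_lam t t' : step t t' -> step (Lam t) (Lam t')
| st_appl t t' s : step t t' -> step (App t s) (App t' s)
| st_appr t s s' : step s s' -> step (App t s) (App t s')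
| st_pairl t t' s : step t t' -> step (Pair t s) (Pair t' s)
| st_pairr t s s' : step s s' -> step (Pair t s) (Pair t s')
| st_pi1 t t' : step t t' -> step (Pi1 t) (Pi1 t')
| st_pi2 t t' : step t t' -> step (Pi2 t) (Pi2 t').

Inductive SN : term -> Prop :=
| SN_intro t : (forall t', step t t' -> SN t') -> SN t.

Inductive ty : Type :=
| Atom
| Arr (A B : ty)
| And (A B : ty).

Inductive ty_equiv : ty -> ty -> Prop :=
| eq_dist A B C : ty_equiv (Arr A (And B C)) (And (Arr A B) (Arr A C))
| eq_refl A : ty_equiv A A
| eq_sym A B : ty_equiv A B -> ty_equiv B A
| eq_trans A B C : ty_equiv A B -> ty_equiv B C -> ty_equiv A C
| eq_arr A A' B B' : ty_equiv A A' -> ty_equiv B B' -> ty_equiv (Arr A B) (Arr A' B')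
| eq_and A A' B B' : ty_equiv A A' -> ty_equiv B B' -> ty_equiv (And A B) (And A' B').

(* contexts: the type of de Bruijn variable n is the n-th entry *)
Definition ctx := list ty.

Inductive typed : ctx -> term -> ty -> Prop :=
| ty_var G n A : nth_error G n = Some A -> typed G (Var n) A
| ty_equiv_rule G t A B : typed G t A -> ty_equiv A B -> typed G t B
| ty_lam G t A B : typed (A :: G) t B -> typed G (Lam t) (Arr A B)
| ty_app G t s A B : typed G t (Arr A B) -> typed G s A -> typed G (App t s) B
| ty_pair G t s A B : typed G t A -> typed G s B -> typed G (Pair t s) (And A B)
| ty_pi1 G t A B : typed G t (And A B) -> typed G (Pi1 t) A
| ty_pi2 G t A B : typed G t (And A B) -> typed G (Pi2 t) B.

Fixpoint interp (A : ty) : term -> Prop :=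
  match A with
  | Atom => SN
  | Arr A B => fun t => forall s, interp A s -> interp B (App t s)
  | And A B => fun t => interp A (Pi1 t) /\ interp B (Pi2 t)
  end.

Definition valid (theta : nat -> term) (G : ctx) : Prop :=
  forall n A, nth_error G n = Some A -> interp A (theta n).

From Stdlib Require Import List.

(* Girard's reducibility method. Each [interp A] is a reducibility candidate:
   its elements are strongly normalizing, it is closed under reduction, and it
   contains every neutral term (neither an abstraction nor a pair) whose
   one-step reducts all belong to it. The only new point is that [interp]
   respects A => (B /\ C) == (A => B) /\ (A => C). For this one compares
   [pi_i (t s)] with [(pi_i t) s]: by induction on strong normalization, every
   reduct of one of them is either of the same shape again or, when [t] is a
   pair or an abstraction, also reachable from the other one through a
   commuting step <t1,t2>s |-> <t1 s,t2 s> or pi_i(\x.w) |-> \x.pi_i w.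
   The theorem then follows by induction on the typing derivation. *)

Lemma ren_ext xi zeta t : (forall n, xi n = zeta n) -> ren xi t = ren zeta t.
Proof.
  revert xi zeta; induction t; intros xi zeta H; simpl; f_equal; auto.
  apply IHt; intros [|n]; simpl; f_equal; auto.
Qed.

Lemma subst_ext sigma tau t :
  (forall n, sigma n = tau n) -> subst sigma t = subst tau t.
Proof.
  revert sigma tau; induction t; intros sigma tau H; simpl; f_equal; auto.
  apply IHt; intros [|n]; simpl; f_equal; auto.
Qed.

Lemma ren_ren xi zeta t : ren xi (ren zeta t) = ren (fun n => xi (zeta n)) t.
Proof.
  revert xi zeta; induction t; intros xi zeta; simpl; f_equal; auto.
  rewrite IHt; apply ren_ext; intros [|n]; reflexivity.
Qed.

Lemma ren_subst xi sigma t :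
  ren xi (subst sigma t) = subst (fun n => ren xi (sigma n)) t.
Proof.
  revert xi sigma; induction t; intros xi sigma; simpl; f_equal; auto.
  rewrite IHt; apply subst_ext; intros [|n]; simpl; auto.
  rewrite !ren_ren; apply ren_ext; reflexivity.
Qed.

Lemma subst_ren sigma xi t : subst sigma (ren xi t) = subst (fun n => sigma (xi n)) t.
Proof.
  revert xi sigma; induction t; intros xi sigma; simpl; f_equal; auto.
  rewrite IHt; apply subst_ext; intros [|n]; reflexivity.
Qed.

Lemma subst_subst sigma tau t :
  subst tau (subst sigma t) = subst (fun n => subst tau (sigma n)) t.
Proof.
  revert sigma tau; induction t; intros sigma tau; simpl; f_equal; auto.
  rewrite IHt; apply subst_ext; intros [|n]; simpl; auto.
  rewrite subst_ren, ren_subst; apply subst_ext; reflexivity.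
Qed.

Lemma subst_id t : subst Var t = t.
Proof.
  induction t; simpl; f_equal; auto.
  rewrite <- IHt at 2; apply subst_ext; intros [|n]; reflexivity.
Qed.

Lemma subst1_subst_up sigma t s :
  subst1 (subst (up sigma) t) s = subst (scons s sigma) t.
Proof.
  unfold subst1; rewrite subst_subst; apply subst_ext; intros [|n]; simpl; auto.
  rewrite subst_ren; apply subst_id.
Qed.

Lemma subst_subst1 sigma t s :
  subst sigma (subst1 t s) = subst1 (subst (up sigma) t) (subst sigma s).
Proof.
  rewrite subst1_subst_up; unfold subst1; rewrite subst_subst.
  apply subst_ext; intros [|n]; reflexivity.
Qed.

Lemma step_subst sigma t t' : step t t' -> step (subst sigma t) (subst sigma t').
Proof.
  intros Hst; revert sigma; induction Hst; intros sigma; simpl; try (constructor; auto).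
  rewrite subst_subst1; constructor.
Qed.

Definition proj (i : bool) : term -> term := if i then Pi1 else Pi2.

Lemma subst1_proj i w s : subst1 (proj i w) s = proj i (subst1 w s).
Proof. destruct i; reflexivity. Qed.

Lemma step_proj i t t' : step t t' -> step (proj i t) (proj i t').
Proof. destruct i; constructor; assumption. Qed.

Lemma step_proj_pair i x y : step (proj i (Pair x y)) (if i then x else y).
Proof. destruct i; constructor. Qed.

Lemma step_proj_lam i w : step (proj i (Lam w)) (Lam (proj i w)).
Proof. destruct i; constructor. Qed.

Lemma step_lam_inv {w u} : step (Lam w) u -> exists w', step w w' /\ u = Lam w'.
Proof. inversion 1; subst; eauto. Qed.

Lemma step_pair_inv {x y u} : step (Pair x y) u ->
  (exists x', step x x' /\ u = Pair x' y) \/ (exists y', step y y' /\ u = Pair x y').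
Proof. inversion 1; subst; eauto. Qed.

Lemma step_app_inv {t s u} : step (App t s) u ->
  (exists w, t = Lam w /\ u = subst1 w s) \/
  (exists x y, t = Pair x y /\ u = Pair (App x s) (App y s)) \/
  (exists t', step t t' /\ u = App t' s) \/
  (exists s', step s s' /\ u = App t s').
Proof. inversion 1; subst; eauto 8. Qed.

Lemma step_proj_inv {i t u} : step (proj i t) u ->
  (exists t', step t t' /\ u = proj i t') \/
  (exists x y, t = Pair x y /\ u = (if i then x else y)) \/
  (exists w, t = Lam w /\ u = Lam (proj i w)).
Proof. destruct i; simpl; inversion 1; subst; eauto 7. Qed.

Definition neutral (t : term) : Prop :=
  match t with Lam _ | Pair _ _ => False | _ => True end.

Lemma neutral_proj i t : neutral (proj i t).
Proof. destruct i; exact I. Qed.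

Lemma step_app_neutral_inv {t s u} : neutral t -> step (App t s) u ->
  (exists t', step t t' /\ u = App t' s) \/ (exists s', step s s' /\ u = App t s').
Proof.
  intros Hn Hst.
  destruct (step_app_inv Hst) as [(w & -> & _) | [(x & y & -> & _) | Hcong]];
    [destruct Hn | destruct Hn | exact Hcong].
Qed.

Lemma SN_preimage (f : term -> term) t :
  (forall u u', step u u' -> step (f u) (f u')) -> SN (f t) -> SN t.
Proof.
  intros Hf Hsn; remember (f t) as ft eqn:E; revert t E.
  induction Hsn as [ft _ IH]; intros t ->.
  constructor; intros t' Hst; exact (IH _ (Hf _ _ Hst) t' (Logic.eq_refl _)).
Qed.

Record candidate (P : term -> Prop) : Prop := {
  cand_SN : forall t, P t -> SN t;
  cand_step : forall t t', P t -> step t t' -> P t';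
  cand_neutral : forall t, neutral t -> (forall t', step t t' -> P t') -> P t }.

Arguments cand_SN {P}.
Arguments cand_step {P}.
Arguments cand_neutral {P}.

Lemma SN_candidate : candidate SN.
Proof.
  split.
  - auto.
  - intros t t' [t0 Hred] Hst; auto.
  - intros t _ Hred; constructor; exact Hred.
Qed.

Section SingleCandidate.

Context {P : term -> Prop} (HP : candidate P).

Lemma candidate_var n : P (Var n).
Proof. apply (cand_neutral HP (Var n) I); inversion 1. Qed.

Lemma candidate_proj_neutral i t :
  neutral t -> (forall t', step t t' -> P (proj i t')) -> P (proj i t).
Proof.
  intros Hn Hred; apply (cand_neutral HP _ (neutral_proj i t)); intros u Hst.
  destruct (step_proj_inv Hst) as [(t' & Ht' & ->) | [(x & y & -> & _) | (w & -> & _)]];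
    [auto | destruct Hn | destruct Hn].
Qed.

Lemma candidate_proj_pair (i : bool) (x y : term) :
  P (if i then x else y) -> SN (if i then y else x) -> P (proj i (Pair x y)).
Proof.
  intros Hsel Hother.
  assert (Hx : SN x) by (destruct i; [exact (cand_SN HP _ Hsel) | exact Hother]).
  assert (Hy : SN y) by (destruct i; [exact Hother | exact (cand_SN HP _ Hsel)]).
  clear Hother; revert y Hy Hsel.
  induction Hx as [x Hredx IHx]; intros y Hy; induction Hy as [y Hredy IHy]; intros Hsel.
  apply (cand_neutral HP _ (neutral_proj i (Pair x y))); intros u Hst.
  destruct (step_proj_inv Hst)
    as [(p & Hp & ->) | [(x' & y' & [= <- <-] & ->) | (w & [=] & _)]]; [| exact Hsel].
  destruct (step_pair_inv Hp) as [(x' & Hx' & ->) | (y' & Hy' & ->)].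
  - apply IHx; [exact Hx' | constructor; exact Hredy |].
    destruct i; [exact (cand_step HP _ _ Hsel Hx') | exact Hsel].
  - apply IHy; [exact Hy' |].
    destruct i; [exact Hsel | exact (cand_step HP _ _ Hsel Hy')].
Qed.

End SingleCandidate.

Section TwoCandidates.

Context {P Q : term -> Prop} (HP : candidate P) (HQ : candidate Q).

Lemma candidate_arrow : candidate (fun t => forall s, P s -> Q (App t s)).
Proof.
  split.
  - intros t Ht; apply (SN_preimage (fun u => App u (Var 0))).
    + intros u u' Hu; apply st_appl, Hu.
    + apply (cand_SN HQ), Ht, (candidate_var HP).
  - intros t t' Ht Hst s Hs; apply (cand_step HQ _ _ (Ht s Hs)), st_appl, Hst.
  - intros t Hn Hred s Hs.
    assert (Hsn : SN s) by exact (cand_SN HP s Hs).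
    revert Hs; induction Hsn as [s _ IHs]; intros Hs.
    apply (cand_neutral HQ (App t s) I); intros u Hst.
    destruct (step_app_neutral_inv Hn Hst) as [(t' & Ht' & ->) | (s' & Hs' & ->)].
    + exact (Hred t' Ht' s Hs).
    + exact (IHs s' Hs' (cand_step HP _ _ Hs Hs')).
Qed.

Lemma candidate_and : candidate (fun t => P (Pi1 t) /\ Q (Pi2 t)).
Proof.
  split.
  - intros t [Ht _]; apply (SN_preimage Pi1).
    + intros u u' Hu; apply st_pi1, Hu.
    + exact (cand_SN HP _ Ht).
  - intros t t' [H1 H2] Hst; split.
    + apply (cand_step HP _ _ H1), st_pi1, Hst.
    + apply (cand_step HQ _ _ H2), st_pi2, Hst.
  - intros t Hn Hred; split.
    + apply (candidate_proj_neutral HP true); [exact Hn |].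
      intros t' Ht'; exact (proj1 (Hred t' Ht')).
    + apply (candidate_proj_neutral HQ false); [exact Hn |].
      intros t' Ht'; exact (proj2 (Hred t' Ht')).
Qed.

Lemma candidate_app_lam w :
  (forall s, P s -> Q (subst1 w s)) -> forall s, P s -> Q (App (Lam w) s).
Proof.
  intros Hw.
  assert (Hsnw : SN w).
  { apply (SN_preimage (subst (scons (Var 0) Var))).
    - intros u u' Hu; apply step_subst, Hu.
    - apply (cand_SN HQ), Hw, (candidate_var HP). }
  revert Hw; induction Hsnw as [w _ IHw]; intros Hw s Hs.
  assert (Hsn : SN s) by exact (cand_SN HP s Hs).
  revert Hs; induction Hsn as [s _ IHs]; intros Hs.
  apply (cand_neutral HQ (App (Lam w) s) I); intros u Hst.
  destruct (step_app_inv Hst)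
    as [(w0 & [= <-] & ->) | [(x & y & [=] & _) | [(t' & Ht' & ->) | (s' & Hs' & ->)]]].
  - exact (Hw s Hs).
  - destruct (step_lam_inv Ht') as (w' & Hw' & ->).
    apply IHw; [exact Hw' | | exact Hs].
    intros s0 Hs0; apply (cand_step HQ _ _ (Hw s0 Hs0)), step_subst, Hw'.
  - exact (IHs s' Hs' (cand_step HP _ _ Hs Hs')).
Qed.

Lemma candidate_app_proj i t : SN t ->
  (forall s, P s -> Q (proj i (App t s))) -> forall s, P s -> Q (App (proj i t) s).
Proof.
  intros Ht; induction Ht as [t _ IHt]; intros Hproj s Hs.
  assert (Hsn : SN s) by exact (cand_SN HP s Hs).
  revert Hs; induction Hsn as [s _ IHs]; intros Hs.
  apply (cand_neutral HQ (App (proj i t) s) I); intros u Hst.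
  destruct (step_app_neutral_inv (neutral_proj i t) Hst) as [(p & Hp & ->) | (s' & Hs' & ->)].
  - destruct (step_proj_inv Hp) as [(t' & Ht' & ->) | [(x & y & -> & ->) | (w & -> & ->)]].
    + apply IHt; [exact Ht' | | exact Hs].
      intros s0 Hs0; apply (cand_step HQ _ _ (Hproj s0 Hs0)), step_proj, st_appl, Ht'.
    + apply (cand_step HQ (proj i (Pair (App x s) (App y s)))).
      * apply (cand_step HQ _ _ (Hproj s Hs)), step_proj, st_app_pair.
      * destruct i; constructor.
    + apply candidate_app_lam; [| exact Hs].
      intros s0 Hs0; rewrite subst1_proj.
      apply (cand_step HQ _ _ (Hproj s0 Hs0)), step_proj, st_beta.
  - exact (IHs s' Hs' (cand_step HP _ _ Hs Hs')).
Qed.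

Lemma candidate_proj_app i t :
  (forall s, P s -> Q (App (proj i t) s)) ->
  (forall s, P s -> SN (App (proj (negb i) t) s)) ->
  forall s, P s -> Q (proj i (App t s)).
Proof.
  intros Happ Hother.
  assert (Ht : SN t).
  { apply (SN_preimage (fun u => App (proj i u) (Var 0))).
    - intros u u' Hu; apply st_appl, step_proj, Hu.
    - apply (cand_SN HQ), Happ, (candidate_var HP). }
  revert Happ Hother; induction Ht as [t _ IHt]; intros Happ Hother s Hs.
  assert (Hsn : SN s) by exact (cand_SN HP s Hs).
  revert Hs; induction Hsn as [s _ IHs]; intros Hs.
  apply (cand_neutral HQ _ (neutral_proj i (App t s))); intros u Hst.
  destruct (step_proj_inv Hst) as [(p & Hp & ->) | [(x & y & [=] & _) | (w & [=] & _)]].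
  destruct (step_app_inv Hp)
    as [(w & -> & ->) | [(x & y & -> & ->) | [(t' & Ht' & ->) | (s' & Hs' & ->)]]].
  - rewrite <- subst1_proj.
    apply (cand_step HQ (App (Lam (proj i w)) s)); [| apply st_beta].
    apply (cand_step HQ _ _ (Happ s Hs)), st_appl, step_proj_lam.
  - apply (candidate_proj_pair HQ).
    + replace (if i then App x s else App y s) with (App (if i then x else y) s)
        by (destruct i; reflexivity).
      apply (cand_step HQ _ _ (Happ s Hs)), st_appl, step_proj_pair.
    + replace (if i then App y s else App x s) with (App (if negb i then x else y) s)
        by (destruct i; reflexivity).
      apply (cand_step SN_candidate _ _ (Hother s Hs)), st_appl, step_proj_pair.
  - apply IHt; [exact Ht' | | | exact Hs].
    + intros s0 Hs0; apply (cand_step HQ _ _ (Happ s0 Hs0)), st_appl, step_proj, Ht'.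
    + intros s0 Hs0.
      apply (cand_step SN_candidate _ _ (Hother s0 Hs0)), st_appl, step_proj, Ht'.
  - exact (IHs s' Hs' (cand_step HP _ _ Hs Hs')).
Qed.

End TwoCandidates.

Lemma candidate_interp A : candidate (interp A).
Proof.
  induction A as [| A IHA B IHB | A IHA B IHB]; simpl.
  - exact SN_candidate.
  - exact (candidate_arrow IHA IHB).
  - exact (candidate_and IHA IHB).
Qed.

Lemma interp_arrow_and A B C t :
  interp (Arr A (And B C)) t <-> interp (And (Arr A B) (Arr A C)) t.
Proof.
  pose proof (candidate_interp A) as HA.
  pose proof (candidate_interp B) as HB.
  pose proof (candidate_interp C) as HC.
  simpl; split.
  - intros Ht.
    assert (Hsn : SN t) by exact (cand_SN (candidate_interp (Arr A (And B C))) t Ht).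
    split.
    + apply (candidate_app_proj HA HB true t Hsn).
      intros s Hs; exact (proj1 (Ht s Hs)).
    + apply (candidate_app_proj HA HC false t Hsn).
      intros s Hs; exact (proj2 (Ht s Hs)).
  - intros [H1 H2] s Hs; split.
    + apply (candidate_proj_app HA HB true t H1); [| exact Hs].
      intros s0 Hs0; exact (cand_SN HC _ (H2 s0 Hs0)).
    + apply (candidate_proj_app HA HC false t H2); [| exact Hs].
      intros s0 Hs0; exact (cand_SN HB _ (H1 s0 Hs0)).
Qed.

Lemma interp_equiv {A B} : ty_equiv A B -> forall t, interp A t <-> interp B t.
Proof.
  induction 1 as [A B C | A | A B _ IH | A B C _ IH1 _ IH2
                 | A A' B B' _ IHA _ IHB | A A' B B' _ IHA _ IHB]; intros t.
  - apply interp_arrow_and.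
  - reflexivity.
  - symmetry; apply IH.
  - etransitivity; [apply IH1 | apply IH2].
  - simpl; split; intros Ht s Hs; apply IHB, Ht, IHA, Hs.
  - simpl; split; intros [H1 H2]; split; (apply IHA || apply IHB); assumption.
Qed.

Lemma valid_scons theta G A s :
  valid theta G -> interp A s -> valid (scons s theta) (A :: G).
Proof.
  intros Hv Hs [|n] B HB; simpl in HB.
  - injection HB as <-; exact Hs.
  - exact (Hv n B HB).
Qed.

Theorem lemma8 (G : ctx) (t : term) (A : ty) (theta : nat -> term) :
  typed G t A -> valid theta G -> interp A (subst theta t).
Proof.
  intros Hty; revert theta.
  induction Hty as [G n A HA | G t A B _ IH Hequiv | G t A B _ IH
                   | G t s A B _ IH1 _ IH2 | G t s A B _ IH1 _ IH2
                   | G t A B _ IH | G t A B _ IH]; intros theta Hv; simpl.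
  - exact (Hv n A HA).
  - apply (interp_equiv Hequiv), IH, Hv.
  - intros s Hs; apply (candidate_app_lam (candidate_interp A) (candidate_interp B)); [| exact Hs].
    intros s0 Hs0; rewrite subst1_subst_up; apply IH, valid_scons; assumption.
  - exact (IH1 theta Hv _ (IH2 theta Hv)).
  - split.
    + apply (candidate_proj_pair (candidate_interp A) true);
        [apply IH1 | apply (cand_SN (candidate_interp B)), IH2]; exact Hv.
    + apply (candidate_proj_pair (candidate_interp B) false);
        [apply IH2 | apply (cand_SN (candidate_interp A)), IH1]; exact Hv.
  - exact (proj1 (IH theta Hv)).
  - exact (proj2 (IH theta Hv)).
Qed.
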